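(* The multi-ideal $\mathcal{L}_\varepsilon$ is not represented by the injective tensor norm $\varepsilon$.
   Context: All spaces are over a fixed field $\mathbb{K}=\mathbb{R}$ or $\mathbb{C}$. $\mathcal{L}(E_1,\ldots,E_n;F)$ is the space of continuous $n$-linear maps with the sup norm, and $E'$ is the dual of $E$. $\varepsilon=(\varepsilon_n)$ is the injective tensor norm, $\varepsilon_n(\sum_j x^{(1)}_j\otimes\cdots\otimes x^{(n)}_j)=\sup_{\varphi_l\in B_{E_l'}}|\sum_j\varphi_1(x_j^{(1)})\cdots\varphi_n(x_j^{(n)})|$. $\mathcal{L}_\varepsilon(E_1,\ldots,E_n;F)$ is the space of $A\in\mathcal{L}(E_1,\ldots,E_n;F)$ whose linearization $A_L\colon(E_1\otimes\cdots\otimes E_n,\varepsilon_n)\to F$, $A_L(x_1\otimes\cdots\otimes x_n)=A(x_1,\ldots,x_n)$, is continuous. Its norm is $\|A\|=\|A_L\|$. A multi-ideal $\mathcal M$ is represented by a tensor norm $\beta$ if for every $n$ and all Banach spaces $E_1,\ldots,E_n,F$ the canonical map $\varphi\colon\mathcal{M}(E_1,\ldots,E_n;F')\to(E_1\otimes\cdots\otimes E_n\otimes F,\beta_{n+1})'$, $\varphi(T)(x_1\otimes\cdots\otimes x_n\otimes y)=T(x_1,\ldots,x_n)(y)$, is an isometric isomorphism onto. *)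

From Stdlib Require Import Reals List Arith.
Open Scope R_scope.
Set Implicit Arguments.
Unset Strict Implicit.

Inductive field_kind := KReal | KComplex.

Definition Cx : Type := (R * R)%type.
Definition cadd (a b : Cx) : Cx := (fst a + fst b, snd a + snd b).
Definition cmul (a b : Cx) : Cx :=
  (fst a * fst b - snd a * snd b, fst a * snd b + snd a * fst b).
Definition copp (a : Cx) : Cx := (- fst a, - snd a).
Definition cabs (a : Cx) : R := sqrt (fst a * fst a + snd a * snd a).

Definition scal (k : field_kind) : Type :=
  match k with KReal => R | KComplex => Cx end.
Definition sadd (k : field_kind) : scal k -> scal k -> scal k :=
  match k return scal k -> scal k -> scal k with
  | KReal => Rplus | KComplex => cadd end.
Definition smul (k : field_kind) : scal k -> scal k -> scal k :=
  match k return scal k -> scal k -> scal k with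
  | KReal => Rmult | KComplex => cmul end.
Definition sopp (k : field_kind) : scal k -> scal k :=
  match k return scal k -> scal k with
  | KReal => Ropp | KComplex => copp end.
Definition szero (k : field_kind) : scal k :=
  match k return scal k with KReal => 0 | KComplex => (0, 0) end.
Definition sone (k : field_kind) : scal k :=
  match k return scal k with KReal => 1 | KComplex => (1, 0) end.
Definition sabs (k : field_kind) : scal k -> R :=
  match k return scal k -> R with KReal => Rabs | KComplex => cabs end.
Arguments sadd {k} _ _.
Arguments smul {k} _ _.
Arguments sopp {k} _.
Arguments sabs {k} _.

Record Banach (k : field_kind) := mkBanach {
  carrier :> Type;
  vadd : carrier -> carrier -> carrier;
  vzero : carrier;
  vopp : carrier -> carrier;
  vscal : scal k -> carrier -> carrier;
  vnorm : carrier -> R;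
  vaddA : forall u v w, vadd u (vadd v w) = vadd (vadd u v) w;
  vaddC : forall u v, vadd u v = vadd v u;
  vadd0 : forall u, vadd vzero u = u;
  vaddN : forall u, vadd (vopp u) u = vzero;
  vscal1 : forall u, vscal (sone k) u = u;
  vscalA : forall a b u, vscal a (vscal b u) = vscal (smul a b) u;
  vscalDr : forall a u v, vscal a (vadd u v) = vadd (vscal a u) (vscal a v);
  vscalDl : forall a b u, vscal (sadd a b) u = vadd (vscal a u) (vscal b u);
  vnorm_eq0 : forall u, vnorm u = 0 -> u = vzero;
  vnormZ : forall a u, vnorm (vscal a u) = sabs a * vnorm u;
  vnorm_triangle : forall u v, vnorm (vadd u v) <= vnorm u + vnorm v;
  vcomplete : forall s : nat -> carrier,
    (forall eps, 0 < eps -> exists N, forall m p, (N <= m)%nat -> (N <= p)%nat ->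
        vnorm (vadd (s m) (vopp (s p))) < eps) ->
    exists l, forall eps, 0 < eps -> exists N, forall m, (N <= m)%nat ->
        vnorm (vadd (s m) (vopp l)) < eps
}.
Arguments vadd {k} _ _ _.
Arguments vzero {k} _.
Arguments vopp {k} _ _.
Arguments vscal {k} _ _ _.
Arguments vnorm {k} _ _.

Definition is_linfun k (X : Banach k) (f : X -> scal k) : Prop :=
  forall a u v, f (vadd X (vscal X a u) v) = sadd (smul a (f u)) (f v).
Definition is_bounded_fun k (X : Banach k) (f : X -> scal k) : Prop :=
  exists M, forall x, sabs (f x) <= M * vnorm X x.
Definition in_dual_ball k (X : Banach k) (f : X -> scal k) : Prop :=
  is_linfun f /\ forall x, sabs (f x) <= vnorm X x.

(* A family is indexed by nat; only the indices i < n are relevant. *)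
Definition pt k (E : nat -> Banach k) : Type := forall i : nat, carrier (E i).

Definition upd k (E : nat -> Banach k) (x : pt E) (i : nat) (v : E i) : pt E :=
  fun j => match Nat.eq_dec i j with
           | left e => eq_rect i (fun j => carrier (E j)) v j e
           | right _ => x j
           end.
Arguments upd {k E} x i v _.

Fixpoint sprod k (n : nat) (g : nat -> scal k) : scal k :=
  match n with O => sone k | S m => smul (sprod m g) (g m) end.
Fixpoint rprod (n : nat) (g : nat -> R) : R :=
  match n with O => 1 | S m => rprod m g * g m end.
Definition ssum k A (g : A -> scal k) (l : list A) : scal k :=
  fold_right (fun a s => sadd (g a) s) (szero k) l.

(* A tensor sum_j x_j^(0) (x) ... (x) x_j^(n-1) is represented by the list of
   its elementary tensors; [eps_le n E u c] means eps_n(u) <= c. *)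
Definition eps_le k (n : nat) (E : nat -> Banach k) (u : list (pt E)) (c : R) : Prop :=
  forall phi : forall i, E i -> scal k,
    (forall i, (i < n)%nat -> in_dual_ball (phi i)) ->
    sabs (ssum (fun x => sprod n (fun i => phi i (x i))) u) <= c.

Definition eps_le1 k (n : nat) (E : nat -> Banach k) (F : Banach k)
    (u : list (pt E * F)) (c : R) : Prop :=
  forall (phi : forall i, E i -> scal k) (psi : F -> scal k),
    (forall i, (i < n)%nat -> in_dual_ball (phi i)) -> in_dual_ball psi ->
    sabs (ssum (fun p => smul (sprod n (fun i => phi i (fst p i))) (psi (snd p))) u) <= c.

(* ---------- maps T : E_0 x ... x E_{n-1} -> F', written T x y = T(x)(y) ---------- *)
Definition multilin_x k (n : nat) (E : nat -> Banach k) (F : Banach k)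
    (T : pt E -> F -> scal k) : Prop :=
  (forall i, (i < n)%nat -> forall (x : pt E) a (v w : E i) (y : F),
     T (upd x i (vadd (E i) (vscal (E i) a v) w)) y
     = sadd (smul a (T (upd x i v) y)) (T (upd x i w) y))
  /\ (forall x x' : pt E, (forall i, (i < n)%nat -> x i = x' i) ->
        forall y, T x y = T x' y).

Definition in_L_dual k (n : nat) (E : nat -> Banach k) (F : Banach k)
    (T : pt E -> F -> scal k) : Prop :=
  multilin_x n T /\
  (forall x, is_linfun (T x) /\ is_bounded_fun (T x)) /\
  exists C, forall x y,
    sabs (T x y) <= C * rprod n (fun i => vnorm (E i) (x i)) * vnorm F y.

Definition Leps_bound k (n : nat) (E : nat -> Banach k) (F : Banach k)
    (T : pt E -> F -> scal k) (C : R) : Prop :=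
  forall (u : list (pt E)) (c : R), eps_le n u c ->
    forall y : F, sabs (ssum (fun x => T x y) u) <= C * c * vnorm F y.

Definition in_Leps_dual k (n : nat) (E : nat -> Banach k) (F : Banach k)
    (T : pt E -> F -> scal k) : Prop :=
  in_L_dual n T /\ exists C, Leps_bound n T C.

(* (n+1)-linear forms on E_0 x ... x E_{n-1} x F, i.e. linear functionals on
   the algebraic tensor product E_0 (x) ... (x) E_{n-1} (x) F *)
Definition is_form k (n : nat) (E : nat -> Banach k) (F : Banach k)
    (B : pt E -> F -> scal k) : Prop :=
  multilin_x n B /\ forall x, is_linfun (B x).

Definition eps_dual_bound k (n : nat) (E : nat -> Banach k) (F : Banach k)
    (B : pt E -> F -> scal k) (C : R) : Prop :=
  forall (u : list (pt E * F)) (c : R), eps_le1 n u c ->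
    sabs (ssum (fun p => B (fst p) (snd p)) u) <= C * c.

(* The canonical map phi(T)(x_0 (x) ... (x) x_{n-1} (x) y) = T(x)(y) is the
   identity on the underlying function (x,y) |-> T x y.  Being an isometric
   isomorphism onto means: phi(T) lies in the dual with the same norm as T
   (equal sets of norm bounds), and every element of the dual is some phi(T). *)
Definition Leps_represented_by_eps (k : field_kind) : Prop :=
  forall (n : nat), (1 <= n)%nat ->
  forall (E : nat -> Banach k) (F : Banach k),
    (forall T : pt E -> F -> scal k, in_Leps_dual n T ->
        (exists C, eps_dual_bound n T C) /\
        (forall C, 0 <= C -> (Leps_bound n T C <-> eps_dual_bound n T C)))
    /\
    (forall B : pt E -> F -> scal k, is_form n B -> (exists C, eps_dual_bound n B C) ->
        exists T : pt E -> F -> scal k, in_Leps_dual n T /\ forall x y, T x y = B x y).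

(* Take n = 1 and E_0 = F = l1^2, the scalar plane with the l1 norm, and let
   T be the Hadamard form T(x)(y) = x1 (y1 + y2) + x2 (y1 - y2).  For fixed y,
   x |-> T(x)(y) / ||y|| lies in the dual ball of l1^2, so ||T||_{L_eps} <= 1.
   But T pairs the tensor e1 (x) (e1 + e2) + e2 (x) (e1 - e2) to 4, while by the
   parallelogram law its injective norm is at most
   sup_{|a|,|b| <= 1} |a + b| + |a - b| <= 2 sqrt 2 < 3.  Hence the norm of T on
   (l1^2 (x) l1^2, eps_2) exceeds 1, and the canonical map is not isometric. *)
From Stdlib Require Import Reals Lra Psatz Eqdep_dec.
Open Scope R_scope.

Definition snorm2 {k} (a : scal k) : R :=
  match k return scal k -> R with
  | KReal => fun r => r ^ 2
  | KComplex => fun z => fst z ^ 2 + snd z ^ 2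
  end a.

Ltac scal_ring k :=
  unfold snorm2 in *; destruct k; simpl in *;
  [ ring
  | repeat match goal with p : Cx |- _ => destruct p end;
    unfold cadd, cmul, copp; simpl; first [ring | f_equal; ring] ].

Lemma pow2_inj x y : 0 <= x -> 0 <= y -> x ^ 2 = y ^ 2 -> x = y.
Proof. intros Hx Hy H. apply Rsqr_inj; [exact Hx | exact Hy |]. rewrite !Rsqr_pow2. exact H. Qed.

Lemma le_of_pow2_eq_plus x c d : 0 <= x -> x ^ 2 = c ^ 2 + d ^ 2 -> c <= x.
Proof.
  intros Hx H. destruct (Rle_dec c x) as [Hle|Hgt]; [exact Hle|].
  apply Rnot_le_lt in Hgt. pose proof (pow2_ge_0 d). nra.
Qed.

Section ScalarField.
Context {k : field_kind}.
Implicit Types a b c : scal k.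

Lemma sadd_assoc a b c : sadd a (sadd b c) = sadd (sadd a b) c.
Proof. scal_ring k. Qed.
Lemma sadd_comm a b : sadd a b = sadd b a.
Proof. scal_ring k. Qed.
Lemma sadd_0_l a : sadd (szero k) a = a.
Proof. scal_ring k. Qed.
Lemma sadd_opp_l a : sadd (sopp a) a = szero k.
Proof. scal_ring k. Qed.
Lemma smul_1_l a : smul (sone k) a = a.
Proof. scal_ring k. Qed.
Lemma smul_assoc a b c : smul a (smul b c) = smul (smul a b) c.
Proof. scal_ring k. Qed.
Lemma smul_add_distr_l a b c : smul a (sadd b c) = sadd (smul a b) (smul a c).
Proof. scal_ring k. Qed.
Lemma smul_add_distr_r a b c : smul (sadd a b) c = sadd (smul a c) (smul b c).
Proof. scal_ring k. Qed.
Lemma smul_0_r a : smul a (szero k) = szero k.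
Proof. scal_ring k. Qed.
Lemma sadd_1_opp_1 : sadd (sone k) (sopp (sone k)) = szero k.
Proof. scal_ring k. Qed.
Lemma smul_scal_add_comm a b c d :
  smul d (sadd (smul a b) c) = sadd (smul a (smul d b)) (smul d c).
Proof. scal_ring k. Qed.
Lemma sadd_opp_smul a b : sadd (smul (sopp (sone k)) b) a = sadd a (sopp b).
Proof. scal_ring k. Qed.

Lemma sabs_pos a : 0 <= sabs a.
Proof. destruct k; simpl; [apply Rabs_pos | apply sqrt_pos]. Qed.

Lemma sabs_sqr a : sabs a ^ 2 = snorm2 a.
Proof.
  unfold snorm2.
  destruct k; cbn -[pow]; [apply pow2_abs|].
  destruct a as [a1 a2]; unfold cabs; cbn [fst snd].
  rewrite pow2_sqrt by nra. ring.
Qed.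

Lemma sabs_eq_0 a : sabs a = 0 -> a = szero k.
Proof.
  intros H. pose proof (sabs_sqr a) as Hsq. rewrite H in Hsq.
  unfold snorm2 in Hsq. destruct k; simpl in *; [nra|].
  destruct a as [a1 a2]; simpl in *. f_equal; nra.
Qed.

Lemma sabs_mult a b : sabs (smul a b) = sabs a * sabs b.
Proof.
  apply pow2_inj; [apply sabs_pos | apply Rmult_le_pos; apply sabs_pos |].
  rewrite Rpow_mult_distr, !sabs_sqr. scal_ring k.
Qed.

Lemma sabs_triang a b : sabs (sadd a b) <= sabs a + sabs b.
Proof.
  pose proof (sabs_sqr a) as Ha; pose proof (sabs_sqr b) as Hb.
  pose proof (sabs_sqr (sadd a b)) as Hab.
  pose proof (sabs_pos a); pose proof (sabs_pos b); pose proof (sabs_pos (sadd a b)).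
  unfold snorm2 in *. destruct k; cbn -[pow] in *; [apply Rabs_triang|].
  destruct a as [a1 a2], b as [b1 b2]; cbn [fst snd] in *.
  set (A := cabs (a1, a2)) in *; set (B := cabs (b1, b2)) in *.
  (* Cauchy-Schwarz via Lagrange's identity *)
  assert (HCS : a1 * b1 + a2 * b2 <= A * B).
  { apply (le_of_pow2_eq_plus _ _ (a1 * b2 - a2 * b1)); [apply Rmult_le_pos; assumption|].
    rewrite Rpow_mult_distr, Ha, Hb. ring. }
  nra.
Qed.

Lemma sabs_opp a : sabs (sopp a) = sabs a.
Proof.
  apply pow2_inj; try apply sabs_pos. rewrite !sabs_sqr. scal_ring k.
Qed.

Lemma sabs_0 : sabs (szero k) = 0.
Proof. apply pow2_inj; [apply sabs_pos | lra |]. rewrite sabs_sqr. scal_ring k. Qed.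

Lemma sabs_1 : sabs (sone k) = 1.
Proof. apply pow2_inj; [apply sabs_pos | lra |]. rewrite sabs_sqr. scal_ring k. Qed.

Definition sreal (r : R) : scal k :=
  match k return scal k with KReal => r | KComplex => (r, 0) end.

Lemma sabs_sreal r : sabs (sreal r) = Rabs r.
Proof.
  apply pow2_inj; [apply sabs_pos | apply Rabs_pos |].
  rewrite sabs_sqr, pow2_abs. unfold snorm2, sreal. destruct k; simpl; ring.
Qed.

Lemma sabs_add_sub_le_3 a b :
  sabs a <= 1 -> sabs b <= 1 -> sabs (sadd a b) + sabs (sadd a (sopp b)) <= 3.
Proof.
  intros Ha Hb.
  assert (Hpar : sabs (sadd a b) ^ 2 + sabs (sadd a (sopp b)) ^ 2
                 = 2 * sabs a ^ 2 + 2 * sabs b ^ 2)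
    by (rewrite !sabs_sqr; scal_ring k).
  pose proof (sabs_pos a); pose proof (sabs_pos b).
  pose proof (sabs_pos (sadd a b)); pose proof (sabs_pos (sadd a (sopp b))).
  set (s := sabs (sadd a b)) in *; set (t := sabs (sadd a (sopp b))) in *.
  assert (Hst : (s + t) ^ 2 <= 8).
  { pose proof (pow2_ge_0 (s - t)). nra. }
  nra.
Qed.

Lemma sabs_sprod_le_1 n (g : nat -> scal k) :
  (forall i, (i < n)%nat -> sabs (g i) <= 1) -> sabs (sprod n g) <= 1.
Proof.
  induction n as [|n IH]; intros Hg; simpl; [rewrite sabs_1; lra|].
  rewrite sabs_mult.
  pose proof (IH (fun i Hi => Hg i (Nat.lt_lt_succ_r i n Hi))).
  pose proof (Hg n (Nat.lt_succ_diag_r n)).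
  pose proof (sabs_pos (sprod n g)); pose proof (sabs_pos (g n)). nra.
Qed.

Lemma ssum_ext {A} (g h : A -> scal k) (l : list A) :
  (forall x, g x = h x) -> ssum g l = ssum h l.
Proof. intros Hgh; induction l; simpl; [|rewrite Hgh, IHl]; reflexivity. Qed.

Lemma ssum_smul {A} (r : scal k) (h : A -> scal k) (l : list A) :
  ssum (fun x => smul r (h x)) l = smul r (ssum h l).
Proof.
  induction l as [|x l IH]; simpl; [symmetry; apply smul_0_r|].
  rewrite IH, smul_add_distr_l. reflexivity.
Qed.

Lemma ssum_zero {A} (h : A -> scal k) (l : list A) :
  (forall x, h x = szero k) -> ssum h l = szero k.
Proof. intros Hh; induction l; simpl; [|rewrite IHl, Hh, sadd_0_l]; reflexivity. Qed.

End ScalarField.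

Definition eventually_lt (d : nat -> R) : Prop :=
  forall eps, 0 < eps -> exists N, forall m, (N <= m)%nat -> d m < eps.

Definition scal_cauchy {k} (s : nat -> scal k) : Prop :=
  forall eps, 0 < eps -> exists N, forall m p, (N <= m)%nat -> (N <= p)%nat ->
    sabs (sadd (s m) (sopp (s p))) < eps.

Lemma eventually_lt_add (d1 d2 : nat -> R) :
  eventually_lt d1 -> eventually_lt d2 -> eventually_lt (fun m => d1 m + d2 m).
Proof.
  intros H1 H2 eps He.
  destruct (H1 (eps / 2)) as [N1 HN1]; [lra|].
  destruct (H2 (eps / 2)) as [N2 HN2]; [lra|].
  exists (N1 + N2)%nat. intros m Hm.
  specialize (HN1 m ltac:(lia)); specialize (HN2 m ltac:(lia)). lra.
Qed.

Lemma eventually_lt_le (d1 d2 : nat -> R) :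
  (forall m, d1 m <= d2 m) -> eventually_lt d2 -> eventually_lt d1.
Proof.
  intros Hle H eps He. destruct (H eps He) as [N HN].
  exists N. intros m Hm. specialize (HN m Hm). specialize (Hle m). lra.
Qed.

Lemma scal_cauchy_le k k' (s : nat -> scal k) (t : nat -> scal k') :
  (forall m p, sabs (sadd (t m) (sopp (t p))) <= sabs (sadd (s m) (sopp (s p)))) ->
  scal_cauchy s -> scal_cauchy t.
Proof.
  intros Hle H eps He. destruct (H eps He) as [N HN].
  exists N. intros m p Hm Hp. specialize (HN m p Hm Hp). specialize (Hle m p). lra.
Qed.

Lemma real_complete (s : nat -> R) :
  scal_cauchy (k := KReal) s ->
  exists l, eventually_lt (fun m => Rabs (s m + - l)).
Proof.
  intros H. destruct (R_complete s) as [l Hl].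
  - intros eps He. destruct (H eps He) as [N HN].
    exists N. intros n m Hn Hm. apply HN; lia.
  - exists l. intros eps He. destruct (Hl eps He) as [N HN].
    exists N. intros m Hm. apply HN. lia.
Qed.

Lemma scal_complete {k} (s : nat -> scal k) :
  scal_cauchy s -> exists l, eventually_lt (fun m => sabs (sadd (s m) (sopp l))).
Proof.
  destruct k; [apply real_complete|]. intros H.
  assert (Hparts : forall z : Cx,
            Rabs (fst z) <= cabs z /\ Rabs (snd z) <= cabs z /\
            cabs z <= Rabs (fst z) + Rabs (snd z)).
  { intros [z1 z2]. pose proof (sabs_sqr (k := KComplex) (z1, z2)) as Hz.
    pose proof (sabs_pos (k := KComplex) (z1, z2)) as Hpos. unfold snorm2 in Hz.
    cbn -[pow] in *.
    rewrite <- (pow2_abs z1), <- (pow2_abs z2) in Hz.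
    pose proof (Rabs_pos z1); pose proof (Rabs_pos z2).
    repeat split.
    - apply (le_of_pow2_eq_plus _ _ (Rabs z2)); assumption.
    - apply (le_of_pow2_eq_plus _ _ (Rabs z1)); [assumption | rewrite Hz; ring].
    - destruct (Rle_dec (cabs (z1, z2)) (Rabs z1 + Rabs z2)) as [Hle|Hgt]; [exact Hle|].
      apply Rnot_le_lt in Hgt. nra. }
  destruct (real_complete (fun n => fst (s n))) as [l1 H1].
  { apply (scal_cauchy_le KComplex KReal s); [|exact H].
    intros m p. apply (Hparts (cadd (s m) (copp (s p)))). }
  destruct (real_complete (fun n => snd (s n))) as [l2 H2].
  { apply (scal_cauchy_le KComplex KReal s); [|exact H].
    intros m p. apply (Hparts (cadd (s m) (copp (s p)))). }
  exists (l1, l2).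
  apply (eventually_lt_le _ _ (fun m => proj2 (proj2 (Hparts _)))).
  exact (eventually_lt_add _ _ H1 H2).
Qed.

Section Ell1Two.
Variable k : field_kind.

Definition ell1_2_carrier : Type := (scal k * scal k)%type.
Definition ell1_2_add (u v : ell1_2_carrier) : ell1_2_carrier :=
  (sadd (fst u) (fst v), sadd (snd u) (snd v)).
Definition ell1_2_opp (u : ell1_2_carrier) : ell1_2_carrier :=
  (sopp (fst u), sopp (snd u)).
Definition ell1_2_scal (a : scal k) (u : ell1_2_carrier) : ell1_2_carrier :=
  (smul a (fst u), smul a (snd u)).
Definition ell1_2_norm (u : ell1_2_carrier) : R := sabs (fst u) + sabs (snd u).

Lemma ell1_2_complete (s : nat -> ell1_2_carrier) :
  (forall eps, 0 < eps -> exists N, forall m p, (N <= m)%nat -> (N <= p)%nat ->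
     ell1_2_norm (ell1_2_add (s m) (ell1_2_opp (s p))) < eps) ->
  exists l, eventually_lt (fun m => ell1_2_norm (ell1_2_add (s m) (ell1_2_opp l))).
Proof.
  unfold ell1_2_norm, ell1_2_add, ell1_2_opp; simpl. intros H.
  destruct (scal_complete (fun n => fst (s n))) as [l1 H1].
  { intros eps He. destruct (H eps He) as [N HN]. exists N. intros m p Hm Hp.
    specialize (HN m p Hm Hp). pose proof (sabs_pos (sadd (snd (s m)) (sopp (snd (s p))))).
    lra. }
  destruct (scal_complete (fun n => snd (s n))) as [l2 H2].
  { intros eps He. destruct (H eps He) as [N HN]. exists N. intros m p Hm Hp.
    specialize (HN m p Hm Hp). pose proof (sabs_pos (sadd (fst (s m)) (sopp (fst (s p))))).
    lra. }
  exists (l1, l2). exact (eventually_lt_add _ _ H1 H2).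
Qed.

Definition ell1_2 : Banach k.
Proof.
  refine (@mkBanach k ell1_2_carrier ell1_2_add (szero k, szero k) ell1_2_opp
            ell1_2_scal ell1_2_norm _ _ _ _ _ _ _ _ _ _ _ ell1_2_complete);
    unfold ell1_2_add, ell1_2_opp, ell1_2_scal, ell1_2_norm.
  - intros [] [] []; simpl; f_equal; apply sadd_assoc.
  - intros [] []; simpl; f_equal; apply sadd_comm.
  - intros []; simpl; f_equal; apply sadd_0_l.
  - intros []; simpl; f_equal; apply sadd_opp_l.
  - intros []; simpl; f_equal; apply smul_1_l.
  - intros a b []; simpl; f_equal; apply smul_assoc.
  - intros a [] []; simpl; f_equal; apply smul_add_distr_l.
  - intros a b []; simpl; f_equal; apply smul_add_distr_r.
  - intros [u1 u2]; simpl; intros H.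
    pose proof (sabs_pos u1); pose proof (sabs_pos u2).
    f_equal; apply sabs_eq_0; lra.
  - intros a []; simpl. rewrite !sabs_mult. ring.
  - intros [u1 u2] [v1 v2]; simpl.
    pose proof (sabs_triang u1 v1); pose proof (sabs_triang u2 v2). lra.
Defined.

Definition hadamard_form (x y : ell1_2) : scal k :=
  sadd (smul (fst x) (sadd (fst y) (snd y)))
       (smul (snd x) (sadd (fst y) (sopp (snd y)))).

Lemma hadamard_form_linear_l (y : ell1_2) : is_linfun (fun x => hadamard_form x y).
Proof. destruct y; intros a [] []; unfold hadamard_form; simpl; scal_ring k. Qed.

Lemma hadamard_form_linear_r (x : ell1_2) : is_linfun (hadamard_form x).
Proof. destruct x; intros a [] []; unfold hadamard_form; simpl; scal_ring k. Qed.

Lemma hadamard_form_bound (x y : ell1_2) :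
  sabs (hadamard_form x y) <= vnorm ell1_2 x * vnorm ell1_2 y.
Proof.
  destruct x as [x1 x2], y as [y1 y2]; unfold hadamard_form; simpl; unfold ell1_2_norm; simpl.
  eapply Rle_trans; [apply sabs_triang|]. rewrite !sabs_mult.
  pose proof (sabs_triang y1 y2). pose proof (sabs_triang y1 (sopp y2)).
  rewrite sabs_opp in *.
  pose proof (sabs_pos x1); pose proof (sabs_pos x2). nra.
Qed.

End Ell1Two.

Arguments hadamard_form {k} x y.

Lemma vnorm_pos {k} {X : Banach k} (u : X) : 0 <= vnorm X u.
Proof.
  pose proof (vnorm_triangle (vscal X (sone k) u) (vscal X (sopp (sone k)) u)) as H.
  rewrite <- vscalDl, !vnormZ, sadd_1_opp_1, sabs_opp, sabs_0, sabs_1 in H. lra.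
Qed.

Lemma linfun_add {k} {X : Banach k} (f : X -> scal k) (u v : X) :
  is_linfun f -> f (vadd X u v) = sadd (f u) (f v).
Proof. intros Hf. rewrite <- (vscal1 u) at 1. rewrite Hf, smul_1_l. reflexivity. Qed.

Lemma upd_same {k} {E : nat -> Banach k} (x : pt E) (i : nat) (v : E i) : upd x i v i = v.
Proof.
  unfold upd. destruct (Nat.eq_dec i i) as [e|]; [|contradiction].
  rewrite (UIP_refl_nat i e). reflexivity.
Qed.

Section FirstVariable.
Context {k : field_kind}.
Variables (E : nat -> Banach k) (F : Banach k) (G : E 0%nat -> F -> scal k).
Hypothesis G_linear_l : forall y, is_linfun (fun v => G v y).
Hypothesis G_linear_r : forall v, is_linfun (G v).
Hypothesis G_bound : forall v y, sabs (G v y) <= vnorm (E 0%nat) v * vnorm F y.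

Definition lift_first (x : pt E) (y : F) : scal k := G (x 0%nat) y.

Lemma lift_first_in_L_dual : in_L_dual 1 lift_first.
Proof.
  unfold lift_first. split; [split|split].
  - intros i Hi x a v w y. assert (i = 0%nat) by lia. subst i.
    rewrite !upd_same. apply G_linear_l.
  - intros x x' Hx y. rewrite (Hx 0%nat ltac:(lia)). reflexivity.
  - intros x. split; [apply G_linear_r|].
    exists (vnorm (E 0%nat) (x 0%nat)). apply G_bound.
  - exists 1. intros x y. simpl. rewrite Rmult_1_l, Rmult_1_l. apply G_bound.
Qed.

(* Test the eps_1 bound of the tensor against the functional G (.) y / ||y||. *)
Lemma lift_first_Leps_bound : Leps_bound 1 lift_first 1.
Proof.
  intros u c Hu y. unfold lift_first; cbv beta.
  pose proof (vnorm_pos y) as Hy.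
  destruct (Req_dec (vnorm F y) 0) as [Hy0|Hy0].
  - rewrite ssum_zero, sabs_0, Hy0; [lra|].
    intros x. apply sabs_eq_0. pose proof (G_bound (x 0%nat) y).
    pose proof (sabs_pos (G (x 0%nat) y)). rewrite Hy0 in *. nra.
  - set (r := sreal (k := k) (/ vnorm F y)).
    assert (Hr : sabs r = / vnorm F y)
      by (unfold r; rewrite sabs_sreal; apply Rabs_pos_eq, Rlt_le, Rinv_0_lt_compat; lra).
    set (phi := fun i => match i as j return E j -> scal k with
                         | O => fun v => smul r (G v y)
                         | S _ => fun _ => szero k end).
    assert (Hphi : forall i, (i < 1)%nat -> in_dual_ball (phi i)).
    { intros i Hi. assert (i = 0%nat) by lia. subst i. split.
      - intros a v w. simpl. rewrite G_linear_l. apply smul_scal_add_comm.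
      - intros v. simpl. rewrite sabs_mult, Hr.
        apply (Rmult_le_reg_l (vnorm F y)); [lra|].
        rewrite <- Rmult_assoc, Rinv_r by lra. pose proof (G_bound v y). nra. }
    specialize (Hu phi Hphi). simpl in Hu.
    rewrite (ssum_ext (fun x => smul (sone k) (smul r (G (x 0%nat) y)))
                      (fun x => smul r (G (x 0%nat) y)))
      in Hu by (intros; apply smul_1_l).
    rewrite ssum_smul, sabs_mult, Hr in Hu.
    apply (Rmult_le_compat_l (vnorm F y)) in Hu; [|lra].
    rewrite <- Rmult_assoc, Rinv_r, Rmult_1_l in Hu by lra.
    rewrite Rmult_1_l, Rmult_comm. exact Hu.
Qed.

Lemma lift_first_in_Leps_dual : in_Leps_dual 1 lift_first.
Proof. split; [apply lift_first_in_L_dual | exists 1; apply lift_first_Leps_bound]. Qed.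

End FirstVariable.

Lemma eps_le1_sum_diff {k} n {E : nat -> Banach k} {F : Banach k}
    (x1 x2 : pt E) (g1 g2 : F) :
  (forall i, (i < n)%nat -> vnorm (E i) (x1 i) <= 1 /\ vnorm (E i) (x2 i) <= 1) ->
  vnorm F g1 <= 1 -> vnorm F g2 <= 1 ->
  eps_le1 n ((x1, vadd F g1 g2)
             :: (x2, vadd F g1 (vscal F (sopp (sone k)) g2)) :: nil) 3.
Proof.
  intros Hx Hg1 Hg2 phi psi Hphi [Hlin Hpsi].
  assert (Hp : forall x, (forall i, (i < n)%nat -> vnorm (E i) (x i) <= 1) ->
                 sabs (sprod n (fun i => phi i (x i))) <= 1).
  { intros x Hxi. apply sabs_sprod_le_1. intros i Hi.
    destruct (Hphi i Hi) as [_ Hb]. eapply Rle_trans; [apply Hb | exact (Hxi i Hi)]. }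
  pose proof (Hp x1 (fun i Hi => proj1 (Hx i Hi))) as Hp1.
  pose proof (Hp x2 (fun i Hi => proj2 (Hx i Hi))) as Hp2.
  assert (Hsum : psi (vadd F g1 g2) = sadd (psi g1) (psi g2)) by (apply linfun_add; exact Hlin).
  assert (Hdiff : psi (vadd F g1 (vscal F (sopp (sone k)) g2)) = sadd (psi g1) (sopp (psi g2))).
  { rewrite vaddC, Hlin. apply sadd_opp_smul. }
  pose proof (sabs_add_sub_le_3 (psi g1) (psi g2)
                (Rle_trans _ _ _ (Hpsi g1) Hg1) (Rle_trans _ _ _ (Hpsi g2) Hg2)) as H3.
  simpl. rewrite Hsum, Hdiff.
  eapply Rle_trans; [apply sabs_triang|].
  eapply Rle_trans; [apply Rplus_le_compat_l, sabs_triang|].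
  rewrite sabs_0, !sabs_mult.
  pose proof (sabs_pos (sadd (psi g1) (psi g2))).
  pose proof (sabs_pos (sadd (psi g1) (sopp (psi g2)))).
  pose proof (sabs_pos (sprod n (fun i => phi i (x1 i)))).
  pose proof (sabs_pos (sprod n (fun i => phi i (x2 i)))). nra.
Qed.

Theorem proposition2p7 : forall k : field_kind, ~ Leps_represented_by_eps k.
Proof.
  intros k Hrep.
  set (V := ell1_2 k).
  set (E := fun _ : nat => V).
  set (T := lift_first E V hadamard_form).
  set (e1 := (sone k, szero k) : V).
  set (e2 := (szero k, sone k) : V).
  pose proof (hadamard_form_linear_l k) as Hlin_l.
  pose proof (hadamard_form_linear_r k) as Hlin_r.
  pose proof (hadamard_form_bound k) as Hbound.
  destruct (Hrep 1%nat (le_n 1) E V) as [Hnorms _].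
  destruct (Hnorms T (lift_first_in_Leps_dual E V _ Hlin_l Hlin_r Hbound)) as [_ Hiff].
  assert (Hdual : eps_dual_bound 1 T 1)
    by (apply Hiff; [lra | exact (lift_first_Leps_bound E V _ Hlin_l Hbound)]).
  assert (Hunit : vnorm V e1 <= 1 /\ vnorm V e2 <= 1)
    by (simpl; unfold ell1_2_norm; simpl; rewrite sabs_0, sabs_1; lra).
  specialize (Hdual _ 3 (eps_le1_sum_diff 1 (fun _ : nat => e1) (fun _ : nat => e2) e1 e2
                           (fun _ _ => Hunit) (proj1 Hunit) (proj2 Hunit))).
  replace (ssum _ _) with (sreal (k := k) 4) in Hdual
    by (destruct k; cbn; [ring | unfold cadd, cmul, copp; cbn; f_equal; ring]).
  rewrite sabs_sreal, Rabs_pos_eq in Hdual; lra.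
Qed.
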